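(* Let $\tilde X$ be an $n\times n$ periodic block band matrix with atom variable $\xi$ and bandwidth $b_n$, where $\mathbb{E}\xi=0$, $\mathbb{E}|\xi|^2=1$ and $\mathbb{E}|\xi|^{4p}<\infty$ for some integer $p\ge1$; let $c_n=3b_n$, $X=\tilde X/\sqrt{c_n}$, $X_z=X-zI$ for fixed $z\in\mathbb{C}$, $A>1$, and $m_{n,z}(\zeta)=\frac1n\sum_{i=1}^n[\lambda_i(X_zX_z^* )-\zeta]^{-1}$. Then for every $\zeta$ with $-A<\Re\zeta<A$, $0<\Im\zeta<1$, $$|1-r_{n,z}(\zeta)|\ge\frac{|\Im\zeta|}{4\sqrt A},$$ where $r_{n,z}(\zeta)=f(m_{n,z}(\zeta))f(m_z(\zeta))\left[\frac{|z|^2}{(1+m_{n,z}(\zeta))(1+m_z(\zeta))}+\zeta\right]$.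
   Context: Periodic block band matrix: $b_n$ divides $n$, $m:=n/b_n$; $\tilde D_i,\tilde U_i,\tilde T_i$ ($i\in[m]$) are $3m$ independent $b_n\times b_n$ random matrices with iid entries distributed as $\xi$; $\tilde X$ is the $m\times m$ block matrix (block indices modulo $m$) with $(i,i)$ block $\tilde D_i$, $(i,i-1)$ block $\tilde T_{i-1}$, $(i,i+1)$ block $\tilde U_{i+1}$, other blocks zero. $f(s):=\left[\frac{|z|^2}{1+s}-(1+s)\zeta\right]^{-1}$. $m_z(\zeta)$ is the Stieltjes transform of the probability measure $\nu_z$ on $[0,\infty)$, characterized as the unique solution of $m_z=f(m_z)$ with $\Im(\zeta m_z(\zeta^2))>0$ and $\Im m_z(\zeta)>0$ when $\Im\zeta>0$; square roots use the principal branch (cut along the negative real axis). *)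

From HB Require Import structures.
From mathcomp Require Import all_boot all_order all_algebra.
From mathcomp Require Import all_classical all_reals all_analysis.
From mathcomp Require Import complex.
Set Implicit Arguments. Unset Strict Implicit. Unset Printing Implicit Defensive.
Import Order.TTheory GRing.Theory Num.Theory.
Local Open Scope ring_scope.
Local Open Scope classical_set_scope.

Section Defs.
Variable R : realType.
Local Notation C := R[i].

Definition mxnat (b : nat) (M : 'M[C]_b) (p q : nat) : C :=
  match (insub p : option 'I_b), (insub q : option 'I_b) with
  | Some p', Some q' => M p' q'
  | _, _ => 0
  end.

(* Periodic block band matrix tilde X of size n = m*b built from the blocks
   D_i, U_i, T_i (i in [m], i.e. indices 0..m-1, block indices modulo m):
   block (i,i) = D_i, block (i,i-1) = T_(i-1), block (i,i+1) = U_(i+1),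
   all other blocks zero.  (If m <= 2, coinciding block positions receive the
   sum of the corresponding blocks.)  Row index k lies in block k %/ b at
   offset k %% b. *)
Definition periodic_band (b m : nat) (D U T : nat -> 'M[C]_b) : 'M[C]_(m * b) :=
  \matrix_(k, l)
    (let i := (k %/ b)%N in let j := (l %/ b)%N in
     let p := (k %% b)%N in let q := (l %% b)%N in
     let im1 := ((i + m.-1) %% m)%N in let ip1 := (i.+1 %% m)%N in
       (if j == i then mxnat (D i) p q else 0)
     + (if j == im1 then mxnat (T im1) p q else 0)
     + (if j == ip1 then mxnat (U ip1) p q else 0)).

Definition adjmx (n : nat) (M : 'M[C]_n) : 'M[C]_n := (map_mx Num.conj M)^T.

Definition fz (z zeta s : C) : C :=
  (`|z| ^+ 2 / (1 + s) - (1 + s) * zeta)^-1.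

(* Stieltjes transform of a measure nu on R:  int 1/(x - zeta) dnu(x),
   written out via real and imaginary parts:
   1/(x - zeta) = ((x - Re zeta) + i Im zeta) / ((x - Re zeta)^2 + Im zeta^2). *)
Definition stieltjes (nu : {measure set R -> \bar R}) (zeta : C) : C :=
  let a := complex.Re zeta in let c := complex.Im zeta in
  Complex (\int[nu]_(x in setT) ((x - a) / ((x - a) ^+ 2 + c ^+ 2)))
          (\int[nu]_(x in setT) (c / ((x - a) ^+ 2 + c ^+ 2))).

(* empirical Stieltjes transform (1/n) sum_i 1/(lambda_i - zeta)
   for an eigenvalue list s (with multiplicity) *)
Definition emp_stieltjes (n : nat) (s : seq C) (zeta : C) : C :=
  (n%:R)^-1 * \sum_(lam <- s) (lam - zeta)^-1.

Definition rnz (z zeta mn mz : C) : C :=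
  fz z zeta mn * fz z zeta mz * (`|z| ^+ 2 / ((1 + mn) * (1 + mz)) + zeta).

End Defs.

(* Write zeta = om^2 with Im om > 0, u = om (1 + m_n), v = om (1 + m) and s = |z|.
   Then r = (s^2 + u v) / ((s^2 - u^2) (s^2 - v^2)), which by partial fractions is the
   mean of (s - u)^-1 (s - v)^-1 and (s + u)^-1 (s + v)^-1, while the fixed-point
   equation m = f(m) reads Im (v / (s^2 - v^2)) = Im v - Im om.  The eigenvalues of
   X_z X_z^* are nonnegative, so Im u >= Im om; similarly Im v > Im om.  Cauchy-Schwarz bounds
   |r|^2 by a quantity K; if K <= (1 - c)^2 then |1 - r| >= c directly.  Otherwise the
   identity for Im ((1 - r) conj(u - conj v)) keeps it away from 0, and AM-GM gives
   |1 - r| >= c whenever c <= 2 Im om (1 - c), which holds for c = Im zeta / (4 sqrt A)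
   because Re om <= 3 sqrt A. *)

From HB Require Import structures.
From mathcomp Require Import all_boot all_order all_algebra.
From mathcomp Require Import all_classical all_reals all_analysis.
From mathcomp Require Import complex.
From mathcomp Require Import ring lra.
Import Order.TTheory GRing.Theory Num.Theory.
Local Open Scope ring_scope.
Local Open Scope classical_set_scope.

Set Implicit Arguments. Unset Strict Implicit.

Local Notation Re := complex.Re.
Local Notation Im := complex.Im.

Section ComplexSqnorm.
Variable R : rcfType.
Implicit Types (x y : R[i]) (k : R).

Definition sqnormc x : R := Re x ^+ 2 + Im x ^+ 2.

Lemma Re_addc x y : Re (x + y) = Re x + Re y.
Proof. by case: x; case: y. Qed.

Lemma Im_addc x y : Im (x + y) = Im x + Im y.
Proof. by case: x; case: y. Qed.

Lemma Re_subc x y : Re (x - y) = Re x - Re y.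
Proof. by case: x; case: y. Qed.

Lemma Im_subc x y : Im (x - y) = Im x - Im y.
Proof. by case: x; case: y. Qed.

Lemma Re_mulc x y : Re (x * y) = Re x * Re y - Im x * Im y.
Proof. by case: x; case: y. Qed.

Lemma Im_mulc x y : Im (x * y) = Re x * Im y + Im x * Re y.
Proof. by case: x => a b; case: y. Qed.

Lemma Im_conjc x : Im x^*%C = - Im x.
Proof. by case: x. Qed.

Lemma conjc_real_subV k x : ((k%:C%C - x)^-1)^*%C = (k%:C%C - x^*%C)^-1.
Proof. by case: x => a b; rewrite conjc_inv -[k%:C%C]/(k +i* 0)%C; simpc; rewrite /= opprK. Qed.

Lemma conjc_real_addV k x : ((k%:C%C + x)^-1)^*%C = (k%:C%C + x^*%C)^-1.
Proof. by case: x => a b; rewrite conjc_inv -[k%:C%C]/(k +i* 0)%C; simpc. Qed.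

Lemma Im_realM k x : Im (k%:C%C * x) = k * Im x.
Proof. by rewrite Im_mulc /= mul0r addr0. Qed.

Lemma invc2 : (2 : R[i])^-1 = ((2 : R)^-1)%:C%C.
Proof. by rewrite fmorphV /= rmorph_nat. Qed.

Lemma Im_half x : Im (x / 2) = Im x / 2.
Proof. by rewrite invc2 mulrC Im_realM mulrC. Qed.

Lemma Re_sqrc x : Re (x ^+ 2) = Re x ^+ 2 - Im x ^+ 2.
Proof. by rewrite expr2 Re_mulc. Qed.

Lemma Im_sqrc x : Im (x ^+ 2) = 2 * Re x * Im x.
Proof. by rewrite expr2 Im_mulc; ring. Qed.

Lemma Im_neq0_neq0 x : Im x != 0 -> x != 0.
Proof. by apply: contra => /eqP ->. Qed.

Lemma sqnormc_ge0 x : 0 <= sqnormc x.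
Proof. by rewrite addr_ge0 ?sqr_ge0. Qed.

Lemma sqr_Im_le_sqnormc x : Im x ^+ 2 <= sqnormc x.
Proof. by rewrite lerDr sqr_ge0. Qed.

Lemma sqnormcM x y : sqnormc (x * y) = sqnormc x * sqnormc y.
Proof. rewrite /sqnormc Re_mulc Im_mulc; ring. Qed.

Lemma sqnormcJ x : sqnormc x^*%C = sqnormc x.
Proof. by case: x => a b; rewrite /sqnormc /= sqrrN. Qed.

Lemma mulcJ_sqnormc x : x * x^*%C = (sqnormc x)%:C%C.
Proof.
by case: x => a b; apply/eqP; rewrite eq_complex /sqnormc /=; apply/andP; split; apply/eqP; ring.
Qed.

Lemma Re_invc x : Re x^-1 = Re x * sqnormc x^-1.
Proof.
case: x => a b; rewrite /sqnormc /=.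
have [->|n0] := eqVneq (a ^+ 2 + b ^+ 2) 0; first by rewrite invr0 !mulr0 oppr0 expr0n /= addr0 mulr0.
by field.
Qed.

Lemma Im_invc x : Im x^-1 = - Im x * sqnormc x^-1.
Proof.
case: x => a b; rewrite /sqnormc /=.
have [->|n0] := eqVneq (a ^+ 2 + b ^+ 2) 0; first by rewrite invr0 !mulr0 oppr0 expr0n /= addr0 mulr0.
by field.
Qed.

Lemma sqnormc_midpoint x y : sqnormc ((x + y) / 2) <= (sqnormc x + sqnormc y) / 2.
Proof.
rewrite invc2 sqnormcM /sqnormc Re_addc Im_addc /= expr0n addr0 -subr_ge0.
set a := Re x; set b := Im x; set a' := Re y; set b' := Im y.
have -> : (a ^+ 2 + b ^+ 2 + (a' ^+ 2 + b' ^+ 2)) / 2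
          - ((a + a') ^+ 2 + (b + b') ^+ 2) * 2^-1 ^+ 2 = ((a - a') ^+ 2 + (b - b') ^+ 2) / 4.
  by field.
by rewrite divr_ge0 // addr_ge0 // sqr_ge0.
Qed.

Lemma sqnormc_one_sub_ge x (c : R) :
  0 <= c <= 1 -> sqnormc x <= (1 - c) ^+ 2 -> c ^+ 2 <= sqnormc (1 - x).
Proof.
case/andP=> c_ge0 c_le1; rewrite /sqnormc Re_subc Im_subc /= => hx.
have Rex_le : Re x <= 1 - c.
  rewrite leNgt; apply/negP => lt_Rex.
  have : (1 - c) ^+ 2 < Re x ^+ 2 by rewrite ltr_pXn2r ?nnegrE ?subr_ge0 // (le_trans _ (ltW lt_Rex)) ?subr_ge0.
  by rewrite ltNge (le_trans _ hx) // lerDl sqr_ge0.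
nra.
Qed.

Lemma le_normc_of_sqnormc x (c : R) : 0 <= c -> c ^+ 2 <= sqnormc x -> c%:C%C <= `|x|.
Proof. by move=> c_ge0 c2_le; rewrite normc_def lecR -(ger0_norm c_ge0) -sqrtr_sqr ler_wsqrtr. Qed.

End ComplexSqnorm.

Lemma amgm_sqr_lower_bound (R : realFieldType) (w c L N : R) :
  0 < w -> 0 <= c -> c <= 2 * w * (1 - c) -> 0 <= L ->
  w + L * w * (1 - c) ^+ 2 <= N -> c ^+ 2 * L <= N ^+ 2.
Proof.
move=> w_gt0 c_ge0 c_le L_ge0 N_ge.
have M_ge0 : 0 <= w + L * w * (1 - c) ^+ 2.
  exact: addr_ge0 (ltW w_gt0) (mulr_ge0 (mulr_ge0 L_ge0 (ltW w_gt0)) (sqr_ge0 _)).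
have c2_le : c ^+ 2 <= 4 * (w * (1 - c)) ^+ 2.
  by rewrite (_ : 4 * _ = (2 * w * (1 - c)) ^+ 2); [rewrite ler_pXn2r ?nnegrE ?(le_trans c_ge0) | ring].
have amgm : 4 * (w * (1 - c)) ^+ 2 * L <= (w + L * w * (1 - c) ^+ 2) ^+ 2.
  rewrite -subr_ge0 (_ : _ - _ = (w - L * w * (1 - c) ^+ 2) ^+ 2) ?sqr_ge0 //; ring.
apply: le_trans (ler_wpM2r L_ge0 c2_le) (le_trans amgm _).
by rewrite ler_pXn2r ?nnegrE ?(le_trans M_ge0).
Qed.

Section ResolventPair.
Variables (R : rcfType) (s : R) (u v : R[i]).
Hypotheses (Im_u_gt0 : 0 < Im u) (Im_v_gt0 : 0 < Im v).

Local Notation S := (s%:C%C : R[i]).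

Let A1 := (S - u)^-1.
Let A2 := (S + u)^-1.
Let B1 := (S - v)^-1.
Let B2 := (S + v)^-1.
Let d1 := sqnormc B1 / 2.
Let d2 := sqnormc B2 / 2.
Let K := d1 * sqnormc A1 + d2 * sqnormc A2.
Let r := (A1 * B1 + A2 * B2) / 2.
Let D := u - v^*%C.

Let real_sub_neq0 x : 0 < Im x -> S - x != 0.
Proof. by move=> Ix; apply: Im_neq0_neq0; rewrite Im_subc /= sub0r oppr_eq0 gt_eqF. Qed.

Let real_add_neq0 x : 0 < Im x -> S + x != 0.
Proof. by move=> Ix; apply: Im_neq0_neq0; rewrite Im_addc /= add0r gt_eqF. Qed.

Let real_subJ_neq0 : S - v^*%C != 0.
Proof. by apply: Im_neq0_neq0; rewrite Im_subc Im_conjc /= sub0r opprK gt_eqF. Qed.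

Let real_addJ_neq0 : S + v^*%C != 0.
Proof. by apply: Im_neq0_neq0; rewrite Im_addc Im_conjc /= add0r oppr_eq0 gt_eqF. Qed.

Let real_sqr_sub_neq0 x : 0 < Im x -> S ^+ 2 - x ^+ 2 != 0.
Proof. by move=> Ix; rewrite subr_sqr mulf_neq0 ?real_sub_neq0 ?real_add_neq0. Qed.

Let Im_A1 : Im A1 = Im u * sqnormc A1.
Proof. by rewrite Im_invc Im_subc /= sub0r opprK. Qed.

Let Im_A2 : Im A2 = - Im u * sqnormc A2.
Proof. by rewrite Im_invc Im_addc /= add0r. Qed.

Let Im_B1 : Im B1 = Im v * sqnormc B1.
Proof. by rewrite Im_invc Im_subc /= sub0r opprK. Qed.

Let Im_B2 : Im B2 = - Im v * sqnormc B2.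
Proof. by rewrite Im_invc Im_addc /= add0r. Qed.

Lemma resolvent_pair_split :
  (S ^+ 2 + u * v) / ((S ^+ 2 - u ^+ 2) * (S ^+ 2 - v ^+ 2)) = r.
Proof.
rewrite /r /A1 /A2 /B1 /B2; field.
by rewrite !real_sub_neq0 ?real_add_neq0 ?real_sqr_sub_neq0.
Qed.

Lemma Im_resolvent : Im (v / (S ^+ 2 - v ^+ 2)) = Im v * (d1 + d2).
Proof.
have -> : v / (S ^+ 2 - v ^+ 2) = (B1 - B2) / 2.
  rewrite /B1 /B2; field.
  by rewrite real_sub_neq0 ?real_add_neq0 ?real_sqr_sub_neq0.
by rewrite Im_half Im_subc /= Im_B1 Im_B2 /d1 /d2; field.
Qed.

Lemma sqnormc_split_le : sqnormc r <= K.
Proof.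
have -> : K = (sqnormc (A1 * B1) + sqnormc (A2 * B2)) / 2.
  by rewrite !sqnormcM /K /d1 /d2; field.
exact: sqnormc_midpoint.
Qed.

Lemma one_sub_split :
  1 - r = 1 - d1%:C%C - d2%:C%C + D * (d2%:C%C * A2 - d1%:C%C * A1).
Proof.
have d1E : d1%:C%C = B1 * (S - v^*%C)^-1 / 2.
  by rewrite -conjc_real_subV mulcJ_sqnormc invc2 -rmorphM.
have d2E : d2%:C%C = B2 * (S + v^*%C)^-1 / 2.
  by rewrite -conjc_real_addV mulcJ_sqnormc invc2 -rmorphM.
rewrite d1E d2E /r /D /A1 /A2 /B1 /B2; field.
by rewrite real_subJ_neq0 real_addJ_neq0 !real_sub_neq0 ?real_add_neq0.
Qed.

Lemma Im_one_sub_split_mulJ :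
  Im ((1 - r) * D^*%C) = - (1 - (d1 + d2)) * (Im u + Im v) - sqnormc D * Im u * K.
Proof.
have -> : (1 - r) * D^*%C
    = (1 - d1%:C%C - d2%:C%C) * D^*%C + (sqnormc D)%:C%C * (d2%:C%C * A2 - d1%:C%C * A1).
  by rewrite one_sub_split -mulcJ_sqnormc; ring.
rewrite Im_addc Im_mulc Im_realM !Im_subc !Re_subc !Im_realM Im_A1 Im_A2 Im_conjc.
rewrite /D Im_subc Im_conjc /K /=; ring.
Qed.

Theorem one_sub_resolvent_pair_ge (w c : R) :
  0 < w -> w <= Im u -> Im (v / (S ^+ 2 - v ^+ 2)) = Im v - w ->
  0 <= c -> c <= 2 * w * (1 - c) ->
  c ^+ 2 <= sqnormc (1 - (S ^+ 2 + u * v) / ((S ^+ 2 - u ^+ 2) * (S ^+ 2 - v ^+ 2))).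
Proof.
move=> w_gt0 w_le fixed c_ge0 c_le; rewrite resolvent_pair_split.
have c_le1 : c <= 1 by nra.
have d_Im_v : (1 - (d1 + d2)) * Im v = w.
  by move: fixed; rewrite Im_resolvent; lra.
have d_lt1 : 0 < 1 - (d1 + d2) by rewrite -(pmulr_lgt0 _ Im_v_gt0) d_Im_v.
have [K_small | K_large] := lerP K ((1 - c) ^+ 2).
  by apply: sqnormc_one_sub_ge; rewrite ?c_ge0 // (le_trans sqnormc_split_le).
have L_gt0 : 0 < sqnormc D.
  apply: lt_le_trans (sqr_Im_le_sqnormc D).
  by rewrite /D Im_subc Im_conjc opprK exprn_gt0 // addr_gt0.
have N_ge : w + sqnormc D * w * (1 - c) ^+ 2 <= - Im ((1 - r) * D^*%C).
  rewrite Im_one_sub_split_mulJ.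
  have : sqnormc D * w * (1 - c) ^+ 2 <= sqnormc D * Im u * K.
    by rewrite -!mulrA ler_pM2l //; exact: ler_pM (ltW w_gt0) (sqr_ge0 _) w_le (ltW K_large).
  have : 0 <= (1 - (d1 + d2)) * Im u by rewrite mulr_ge0 ?ltW.
  lra.
have := amgm_sqr_lower_bound w_gt0 c_ge0 c_le (ltW L_gt0) N_ge.
rewrite sqrrN => /le_trans/(_ (sqr_Im_le_sqnormc _)).
by rewrite sqnormcM sqnormcJ ler_pM2r.
Qed.

End ResolventPair.

Section GramEigenvalues.
Variable C : numClosedFieldType.

Lemma mulmx_conjT_ge0 n (x : 'rV[C]_n) : 0 <= (x *m (map_mx Num.conj x)^T) 0 0.
Proof. by rewrite mxE sumr_ge0 // => j _; rewrite !mxE mul_conjC_ge0. Qed.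

Lemma mulmx_conjT_gt0 n (x : 'rV[C]_n) : x != 0 -> 0 < (x *m (map_mx Num.conj x)^T) 0 0.
Proof.
move=> x_neq0; have [j xj_neq0] : exists j, x 0 j != 0.
  apply/existsP; apply: contraR x_neq0; rewrite negb_exists => /forallP x0.
  by apply/eqP/rowP => j; rewrite mxE; apply/eqP; rewrite -[_ == _]negbK x0.
rewrite mxE (bigD1 j) //= ltr_pwDl ?sumr_ge0 // => [|k _]; rewrite !mxE.
  by rewrite mul_conjC_gt0.
exact: mul_conjC_ge0.
Qed.

Lemma eigenvalue_mulmx_conjT_ge0 n (M : 'M[C]_n) lam :
  eigenvalue (M *m (map_mx Num.conj M)^T) lam -> 0 <= lam.
Proof.
move=> /eigenvalueP [v v_eig v_neq0].
have e : (v *m M) *m (map_mx Num.conj (v *m M))^T = lam *: (v *m (map_mx Num.conj v)^T).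
  by rewrite map_mxM trmx_mul !mulmxA -(mulmxA v) v_eig scalemxAl.
have /(congr1 (fun A : 'M[C]_1 => A 0 0)) := e; rewrite [in RHS]mxE => lamE.
have q_gt0 := mulmx_conjT_gt0 v_neq0.
rewrite -(pmulr_lge0 _ q_gt0) -lamE; exact: mulmx_conjT_ge0.
Qed.

End GramEigenvalues.

Section UpperHalfPlane.
Variable R : rcfType.
Implicit Types x om : R[i].

Lemma sqrtc_Im_gt0 x : 0 < Im x -> exists2 om, om ^+ 2 = x & 0 < Im om.
Proof.
move=> Ix_gt0; have sqrt_x := sqr_sqrtc x.
case: (ltrgtP (Im (sqrtc x)) 0) => [Im_lt0 | Im_gt0 | Im_eq0].
- by exists (- sqrtc x); rewrite ?sqrrN // raddfN oppr_gt0.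
- by exists (sqrtc x).
- by move: Ix_gt0; rewrite -sqrt_x Im_sqrc Im_eq0 mulr0 ltxx.
Qed.

Lemma Im_mul_resolvent_ge0 om x : 0 < Im om -> 0 <= x -> 0 <= Im (om * (x - om ^+ 2)^-1).
Proof.
move=> Im_om_gt0; rewrite lecE /= => /andP [/eqP Im_x Re_x_ge0].
rewrite Im_mulc Re_invc Im_invc Re_subc Im_subc Re_sqrc Im_sqrc Im_x.
rewrite (_ : _ + _ = Im om * (Re om ^+ 2 + Re x + Im om ^+ 2) * sqnormc (x - om ^+ 2)^-1); last by ring.
apply: mulr_ge0 (sqnormc_ge0 _); apply: mulr_ge0 (ltW Im_om_gt0) _; nra.
Qed.

End UpperHalfPlane.

Lemma Im_mul_emp_stieltjes_ge0 (R : realType) n (s : seq R[i]) (om : R[i]) :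
  0 < Im om -> {in s, forall x, 0 <= x} -> 0 <= Im (om * emp_stieltjes n s (om ^+ 2)).
Proof.
move=> Im_om_gt0 s_ge0; rewrite /emp_stieltjes mulrCA.
have -> : (n%:R : R[i])^-1 = ((n%:R : R)^-1)%:C%C by rewrite fmorphV /= rmorph_nat.
rewrite Im_realM mulr_ge0 ?invr_ge0 // mulr_sumr raddf_sum big_seq sumr_ge0 // => x x_s.
exact: Im_mul_resolvent_ge0 (s_ge0 x x_s).
Qed.

Lemma le_band_ratio (R : rcfType) (A p w : R) :
  1 < A -> p ^+ 2 - w ^+ 2 < A -> 0 < w -> 0 < 2 * p * w < 1 ->
  2 * p * w / (4 * Num.sqrt A) <= 2 * w * (1 - 2 * p * w / (4 * Num.sqrt A)).
Proof.
move=> A_gt1 Re_lt w_gt0 /andP [Im_gt0 Im_lt1]; set c := _ / _.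
have sqrtA_ge1 : 1 <= Num.sqrt A by rewrite -sqrtr1 ler_wsqrtr ?ltW.
have sqrtA_sqr : Num.sqrt A ^+ 2 = A by rewrite sqr_sqrtr // ltW // (lt_trans ltr01).
have cE : c * (4 * Num.sqrt A) = 2 * p * w.
  by rewrite /c mulfVK // mulf_neq0 // gt_eqF // (lt_le_trans ltr01).
have p_le : p <= 3 * Num.sqrt A.
  have [p_le1 | p_gt1] := lerP p 1; first by nra.
  have w_lt : w < 1 / 2 by nra.
  rewrite leNgt; apply/negP => p_gt; nra.
nra.
Qed.

Section SquareRootParametrization.
Variables (R : realType) (z om : R[i]).

Lemma fz_sqr a : 1 + a != 0 -> fz z (om ^+ 2) a = (1 + a) / (`|z| ^+ 2 - (om * (1 + a)) ^+ 2).
Proof.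
move=> a1_neq0; rewrite /fz -[in RHS]invf_div; congr (_^-1).
by field.
Qed.

Lemma rnz_sqr a b : 1 + a != 0 -> 1 + b != 0 ->
  rnz z (om ^+ 2) a b = (`|z| ^+ 2 + om * (1 + a) * (om * (1 + b)))
    / ((`|z| ^+ 2 - (om * (1 + a)) ^+ 2) * (`|z| ^+ 2 - (om * (1 + b)) ^+ 2)).
Proof.
move=> a1_neq0 b1_neq0; rewrite /rnz !fz_sqr // [in RHS]invfM.
move: (_ - (om * (1 + a)) ^+ 2)^-1 (_ - (om * (1 + b)) ^+ 2)^-1 => i1 i2; field.
by rewrite a1_neq0 b1_neq0.
Qed.

Lemma one_sub_rnz_ge a b (c : R) :
  0 < Im om -> 0 <= Im (om * a) -> 0 < Im (om * b) -> b = fz z (om ^+ 2) b ->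
  0 <= c -> c <= 2 * Im om * (1 - c) -> c%:C%C <= `|1 - rnz z (om ^+ 2) a b|.
Proof.
move=> Im_om_gt0 Im_a_ge0 Im_b_gt0 b_fixed c_ge0 c_le.
have Im_u_ge : Im om <= Im (om * (1 + a)) by rewrite mulrDr mulr1 Im_addc lerDl.
have Im_v_gt : Im om < Im (om * (1 + b)) by rewrite mulrDr mulr1 Im_addc ltrDl.
have a1_neq0 : 1 + a != 0.
  by apply: contraTneq Im_u_ge => ->; rewrite mulr0 /= -ltNge.
have b1_neq0 : 1 + b != 0.
  by apply: contraTneq Im_v_gt => ->; rewrite mulr0 /= -leNgt ltW.
have fixed : Im (om * (1 + b) / (`|z| ^+ 2 - (om * (1 + b)) ^+ 2)) = Im (om * (1 + b)) - Im om.
  by rewrite -mulrA -fz_sqr // -b_fixed mulrDr mulr1 Im_addc addrAC subrr add0r.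
rewrite rnz_sqr //; apply: le_normc_of_sqnormc => //.
rewrite normc_def in fixed *.
apply: one_sub_resolvent_pair_ge fixed c_ge0 c_le => //.
- exact: lt_le_trans Im_u_ge.
- exact: lt_trans Im_v_gt.
Qed.

End SquareRootParametrization.

Theorem lemma3p5 (R : realType) (b m : nat) (hb : (0 < b)%N) (hm : (0 < m)%N)
  (D U T : nat -> 'M[R[i]]_b) (z : R[i]) (A : R) (hA : 1 < A)
  (nu : probability R R) (hnu0 : nu `]-oo, 0[ = 0%E)
  (hmz : forall zeta : R[i], 0 < complex.Im zeta ->
     stieltjes nu zeta = fz z zeta (stieltjes nu zeta) /\
     0 < complex.Im (stieltjes nu zeta) /\
     0 < complex.Im (zeta * stieltjes nu (zeta ^+ 2)))
  (zeta : R[i]) (hre : - A < complex.Re zeta < A) (him : 0 < complex.Im zeta < 1)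
  (s : seq R[i]) :
  let n := (m * b)%N in
  let X := ((Num.sqrt ((3 * b)%:R : R))^-1)%:C%C *: periodic_band m D U T in
  let Xz := X - z%:M in
  char_poly (Xz *m adjmx Xz) = \prod_(lam <- s) ('X - lam%:P) ->
  (complex.Im zeta / (4 * Num.sqrt A))%:C%C
    <= `|1 - rnz z zeta (emp_stieltjes n s zeta) (stieltjes nu zeta)|.
Proof.
move=> n X Xz char_Xz.
have s_ge0 : {in s, forall lam, 0 <= lam}.
  move=> lam lam_s; apply: (@eigenvalue_mulmx_conjT_ge0 _ _ Xz).
  by rewrite eigenvalue_root_char char_Xz root_prod_XsubC.
case/andP: him => Im_gt0 Im_lt1; case/andP: hre => _ Re_lt.
have [om om_sqr Im_om_gt0] := sqrtc_Im_gt0 Im_gt0.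
have [m_fixed _] := hmz zeta Im_gt0.
have [_ [_ Im_om_m_gt0]] := hmz om Im_om_gt0.
subst zeta.
apply: one_sub_rnz_ge => //.
- exact: Im_mul_emp_stieltjes_ge0.
- exact: divr_ge0 (ltW Im_gt0) (mulr_ge0 (ler0n _ 4) (sqrtr_ge0 A)).
- rewrite Re_sqrc in Re_lt; rewrite Im_sqrc in Im_gt0 Im_lt1 *.
  by apply: le_band_ratio; rewrite ?Im_gt0.
Qed.
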